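(* Let $p$ be a prime, $\tau>0$, $r_E=r_I=0$. Let $S_E,S_I:\mathbb{R}\to\mathbb{R}$ be bounded Lipschitz functions with $S_E(0)=S_I(0)=0$, let $w_{EE},w_{EI},w_{IE},w_{II}\in\mathcal{C}(\mathbb{Z}_p)$ and $h_E,h_I\in\mathcal{C}([0,\infty),\mathcal{C}(\mathbb{Z}_p))$. Let $\mathcal{X}=\mathcal{C}(\mathbb{Z}_p)\times\mathcal{C}(\mathbb{Z}_p)$ with norm $\|(f_1,f_2)\|=\max\{\|f_1\|_\infty,\|f_2\|_\infty\}$ and, for $f=(f_1,f_2)\in\mathcal{X}$ and $s\ge0$, $$\boldsymbol{H}(f,s)=\Big(S_E\big(w_{EE}\ast f_1-w_{EI}\ast f_2+h_E(\cdot,s)\big),\ S_I\big(w_{IE}\ast f_1-w_{II}\ast f_2+h_I(\cdot,s)\big)\Big).$$ Let $(E_0,I_0)\in\mathcal{X}$ and let $u(t)=(E(\cdot,t),I(\cdot,t))\in\mathcal{C}^1([0,\infty),\mathcal{X})$ be the unique solution of $$\partial_tu+\tfrac1\tau u=\tfrac1\tau\boldsymbol{H}(u,t),\qquad u(0)=(E_0,I_0).$$ For $l\ge1$ let $u_l(t)=(E_l(\cdot,t),I_l(\cdot,t))$ be the unique solution in $\mathcal{C}^1([0,\infty),\mathcal{X}_l)$ of the discretized problem $$\partial_tu_l+\tfrac1\tau u_l=\tfrac1\tau\boldsymbol{P}_l\big(\boldsymbol{H}(u_l,t)\big),\qquad u_l(0)=\boldsymbol{P}_l(E_0,I_0).$$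 Then for every $T\in(0,\infty)$, $$\lim_{l\to\infty}\sup_{0\le t\le T}\|u_l(t)-u(t)\|=0.$$
   Context: $\mathbb{Z}_p$ is the ring of $p$-adic integers with $p$-adic absolute value $|\cdot|_p$; it is a compact Abelian group and $dx$ is its Haar measure normalized by $\int_{\mathbb{Z}_p}dx=1$. $\mathcal{C}(\mathbb{Z}_p)$ is the space of real-valued continuous functions on $\mathbb{Z}_p$ with sup norm $\|\cdot\|_\infty$. Convolution: $(w\ast f)(x)=\int_{\mathbb{Z}_p}w(x-y)f(y)\,dx(y)$. $\Omega(p^l|x-a|_p)$ denotes the characteristic function of the ball $a+p^l\mathbb{Z}_p$. $G_l=\{i_0+i_1p+\dots+i_{l-1}p^{l-1}:i_j\in\{0,\dots,p-1\}\}$ is a set of representatives of $\mathbb{Z}_p/p^l\mathbb{Z}_p$. $\mathcal{D}^l(\mathbb{Z}_p)$ is the finite-dimensional space of functions $\sum_{i\in G_l}\varphi(i)\Omega(p^l|x-i|_p)$, $\varphi(i)\in\mathbb{R}$, and $\mathcal{X}_l=\mathcal{D}^l(\mathbb{Z}_p)\times\mathcal{D}^l(\mathbb{Z}_p)\subset\mathcal{X}$ with the same norm. The operator $\boldsymbol{P}_l:\mathcal{X}\to\mathcal{X}_l$ acts componentwise by $(\boldsymbol{P}_lf)(x)=\sum_{i\in G_l}f(i)\,\Omega(p^l|x-i|_p)$. *)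

From Stdlib Require Import Reals ZArith Lia Znumtheory.
From Coquelicot Require Import Coquelicot.

Definition pmod (p n : nat) : Z := (Z.of_nat p ^ Z.of_nat n)%Z.

(* An element x of Z_p is represented by its residues x_n = x mod p^n,
   0 <= x_n < p^n, with x_{n+1} mod p^n = x_n (inverse limit of Z/p^nZ). *)
Record Zp (p : nat) := mkZp {
  zp_seq : nat -> Z;
  zp_range : forall n, (0 <= zp_seq n < pmod p n)%Z;
  zp_compat : forall n, (zp_seq (S n) mod pmod p n = zp_seq n)%Z }.
Arguments zp_seq {p} _ _.

Lemma pmod_S p n : pmod p (S n) = (pmod p n * Z.of_nat p)%Z.
Proof.
  unfold pmod. rewrite Nat2Z.inj_succ, Z.pow_succ_r by lia. ring.
Qed.

Lemma zp_sub_range p (x y : Zp p) n :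
  (0 <= (zp_seq x n - zp_seq y n) mod pmod p n < pmod p n)%Z.
Proof.
  pose proof (zp_range p x n). apply Z.mod_pos_bound. lia.
Qed.

Lemma zp_sub_compat p (x y : Zp p) n :
  (((zp_seq x (S n) - zp_seq y (S n)) mod pmod p (S n)) mod pmod p n
    = (zp_seq x n - zp_seq y n) mod pmod p n)%Z.
Proof.
  pose proof (zp_range p x n) as Hn.
  pose proof (zp_range p x (S n)) as HSn.
  rewrite <- Zmod_div_mod; try lia.
  - rewrite Zminus_mod, !zp_compat. reflexivity.
  - exists (Z.of_nat p). rewrite pmod_S. ring.
Qed.

Definition zp_sub {p} (x y : Zp p) : Zp p :=
  mkZp p (fun n => ((zp_seq x n - zp_seq y n) mod pmod p n)%Z)
       (zp_sub_range p x y) (zp_sub_compat p x y).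

Lemma prime_pmod_pos p (Hp : prime (Z.of_nat p)) n : (0 < pmod p n)%Z.
Proof.
  destruct Hp as [H1 _]. unfold pmod. apply Z.pow_pos_nonneg; lia.
Qed.

Lemma zp_nat_range p (Hp : prime (Z.of_nat p)) (i : nat) n :
  (0 <= Z.of_nat i mod pmod p n < pmod p n)%Z.
Proof. apply Z.mod_pos_bound, prime_pmod_pos, Hp. Qed.

Lemma zp_nat_compat p (Hp : prime (Z.of_nat p)) (i : nat) n :
  ((Z.of_nat i mod pmod p (S n)) mod pmod p n = Z.of_nat i mod pmod p n)%Z.
Proof.
  pose proof (prime_pmod_pos p Hp n). pose proof (prime_pmod_pos p Hp (S n)).
  rewrite <- Zmod_div_mod; try lia.
  exists (Z.of_nat p). rewrite pmod_S. ring.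
Qed.

Definition zp_of_nat p (Hp : prime (Z.of_nat p)) (i : nat) : Zp p :=
  mkZp p (fun n => (Z.of_nat i mod pmod p n)%Z)
       (zp_nat_range p Hp i) (zp_nat_compat p Hp i).

(* x belongs to the ball a + p^l Z_p, i.e. |x - a|_p <= p^{-l} *)
Definition in_ball {p} (l : nat) (a x : Zp p) : Prop := zp_seq x l = zp_seq a l.

(* Omega(p^l |x - a|_p) : characteristic function of the ball a + p^l Z_p *)
Definition Omega {p} (l : nat) (a x : Zp p) : R :=
  if Z.eq_dec (zp_seq x l) (zp_seq a l) then 1%R else 0%R.

Fixpoint rsum (f : nat -> R) (n : nat) : R :=
  match n with O => 0%R | S k => (rsum f k + f k)%R end.

Open Scope R_scope.

Definition cont_Zp {p} (f : Zp p -> R) : Prop :=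
  forall x eps, 0 < eps -> exists l : nat,
    forall y, in_ball l x y -> Rabs (f y - f x) < eps.

(* Integral against the normalized Haar measure dx on Z_p (mu(a+p^l Z_p) = p^{-l}),
   for continuous f: the limit of the Riemann sums over G_l = {0,...,p^l-1}. *)
Definition haar_int p (Hp : prime (Z.of_nat p)) (f : Zp p -> R) : R :=
  real (Lim_seq (fun l => rsum (fun i => f (zp_of_nat p Hp i)) (p ^ l) / INR (p ^ l))).

Definition conv p (Hp : prime (Z.of_nat p)) (w f : Zp p -> R) (x : Zp p) : R :=
  haar_int p Hp (fun y => w (zp_sub x y) * f y).

Definition in_Dl p (Hp : prime (Z.of_nat p)) (l : nat) (f : Zp p -> R) : Prop :=
  exists phi : nat -> R, forall x,
    f x = rsum (fun i => phi i * Omega l (zp_of_nat p Hp i) x) (p ^ l).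

Definition Pl p (Hp : prime (Z.of_nat p)) (l : nat) (f : Zp p -> R) (x : Zp p) : R :=
  rsum (fun i => f (zp_of_nat p Hp i) * Omega l (zp_of_nat p Hp i) x) (p ^ l).

Definition unif_close {p} (f g : Zp p -> R) (eps : R) : Prop :=
  forall x, Rabs (f x - g x) <= eps.

Definition bounded_lipschitz (S : R -> R) : Prop :=
  (exists M, forall a, Rabs (S a) <= M) /\
  (exists L, forall a b, Rabs (S a - S b) <= L * Rabs (a - b)).

(* h in C([0,oo), C(Z_p)) ; h s is h(., s) *)
Definition cont_time_CZp {p} (h : R -> Zp p -> R) : Prop :=
  (forall s, 0 <= s -> cont_Zp (h s)) /\
  (forall s eps, 0 <= s -> 0 < eps -> exists delta, 0 < delta /\
     forall s', 0 <= s' -> Rabs (s' - s) < delta -> unif_close (h s') (h s) eps).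

(* u = (E, I) in C^1([0,oo), X) with derivative (E', I'), X = C(Z_p) x C(Z_p)
   with the max of the sup norms (one-sided derivative at t = 0). *)
Definition C1_X {p} (E I E' I' : R -> Zp p -> R) : Prop :=
  (forall t, 0 <= t -> cont_Zp (E t) /\ cont_Zp (I t) /\
                       cont_Zp (E' t) /\ cont_Zp (I' t)) /\
  (forall t eps, 0 <= t -> 0 < eps -> exists delta, 0 < delta /\
     forall s, 0 <= s -> s <> t -> Rabs (s - t) < delta ->
       unif_close (fun x => (E s x - E t x) / (s - t)) (E' t) eps /\
       unif_close (fun x => (I s x - I t x) / (s - t)) (I' t) eps) /\
  (forall t eps, 0 <= t -> 0 < eps -> exists delta, 0 < delta /\
     forall s, 0 <= s -> Rabs (s - t) < delta ->
       unif_close (E' s) (E' t) eps /\ unif_close (I' s) (I' t) eps).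

Definition H_E p (Hp : prime (Z.of_nat p)) (SE : R -> R) (wEE wEI : Zp p -> R)
  (hE : R -> Zp p -> R) (f1 f2 : Zp p -> R) (s : R) (x : Zp p) : R :=
  SE (conv p Hp wEE f1 x - conv p Hp wEI f2 x + hE s x).

Definition H_I p (Hp : prime (Z.of_nat p)) (SI : R -> R) (wIE wII : Zp p -> R)
  (hI : R -> Zp p -> R) (f1 f2 : Zp p -> R) (s : R) (x : Zp p) : R :=
  SI (conv p Hp wIE f1 x - conv p Hp wII f2 x + hI s x).

Definition is_solution p (Hp : prime (Z.of_nat p)) (tau : R) (SE SI : R -> R)
  (wEE wEI wIE wII : Zp p -> R) (hE hI : R -> Zp p -> R) (E0 I0 : Zp p -> R)
  (E I : R -> Zp p -> R) : Prop :=
  exists E' I' : R -> Zp p -> R,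
    C1_X E I E' I' /\
    (forall x, E 0 x = E0 x) /\ (forall x, I 0 x = I0 x) /\
    (forall t x, 0 <= t ->
       E' t x + E t x / tau = H_E p Hp SE wEE wEI hE (E t) (I t) t x / tau /\
       I' t x + I t x / tau = H_I p Hp SI wIE wII hI (E t) (I t) t x / tau).

Definition is_disc_solution p (Hp : prime (Z.of_nat p)) (l : nat) (tau : R) (SE SI : R -> R)
  (wEE wEI wIE wII : Zp p -> R) (hE hI : R -> Zp p -> R) (E0 I0 : Zp p -> R)
  (E I : R -> Zp p -> R) : Prop :=
  exists E' I' : R -> Zp p -> R,
    C1_X E I E' I' /\
    (forall t, 0 <= t -> in_Dl p Hp l (E t) /\ in_Dl p Hp l (I t) /\
                         in_Dl p Hp l (E' t) /\ in_Dl p Hp l (I' t)) /\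
    (forall x, E 0 x = Pl p Hp l E0 x) /\ (forall x, I 0 x = Pl p Hp l I0 x) /\
    (forall t x, 0 <= t ->
       E' t x + E t x / tau = Pl p Hp l (H_E p Hp SE wEE wEI hE (E t) (I t) t) x / tau /\
       I' t x + I t x / tau = Pl p Hp l (H_I p Hp SI wIE wII hI (E t) (I t) t) x / tau).

(* The error e_l = u_l - u satisfies  e_l' = (- e_l + A_l) / tau  with forcing
   A_l = [P_l H(u_l) - P_l H(u)] + [P_l H(u) - H(u)].  The first bracket is at most K |e_l|,
   since H is S composed with convolutions against bounded kernels, hence Lipschitz; the second
   is the projection error of H along the exact trajectory.  A barrier (Gronwall-type) lemma,
   proved by real induction without any integration, gives |e_l(t)| <= c exp((K + 1) t / tau)
   as soon as the initial and projection errors are at most c.  These errors become small for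
   large l because P_l f (x) = f (rep_l x) and the functions involved are equicontinuous:
   continuous functions on the compact space Z_p are uniformly continuous (Koenig's lemma on the
   tree of balls), and continuity in time on [0, T] makes x |-> H(u(t), t)(x) equicontinuous. *)

From Stdlib Require Import Reals ZArith Znumtheory Lia Lra Psatz.
From Stdlib Require Import Classical ClassicalEpsilon.
From Coquelicot Require Import Coquelicot.
Open Scope R_scope.

Ltac solve_abs := unfold Rabs in *; repeat match goal with
  | |- context[Rcase_abs ?x] => destruct (Rcase_abs x)
  | H: context[Rcase_abs ?x] |- _ => destruct (Rcase_abs x) end; lra.

Section PAdicBalls.

Variable p : nat.
Hypothesis Hp : prime (Z.of_nat p).

Lemma pmod_nat n : pmod p n = Z.of_nat (p ^ n).
Proof. unfold pmod. rewrite Nat2Z.inj_pow. reflexivity. Qed.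

Lemma pow_p_pos n : (0 < p ^ n)%nat.
Proof. destruct Hp as [H _]. apply Nat.neq_0_lt_0, Nat.pow_nonzero. lia. Qed.

Lemma zp_seq_le (x : Zp p) k m : (k <= m)%nat ->
  zp_seq x k = (zp_seq x m mod pmod p k)%Z.
Proof.
  induction 1 as [|m Hkm IH].
  - pose proof (zp_range p x k). rewrite Z.mod_small; lia.
  - rewrite IH, <- (zp_compat p x m).
    pose proof (prime_pmod_pos p Hp k). pose proof (prime_pmod_pos p Hp m).
    rewrite <- Zmod_div_mod; try lia.
    rewrite !pmod_nat. exists (Z.of_nat (p ^ (m - k))).
    rewrite <- Nat2Z.inj_mul, <- Nat.pow_add_r. do 2 f_equal. lia.
Qed.

Lemma in_ball_mono (x y : Zp p) k m : (k <= m)%nat -> in_ball m x y -> in_ball k x y.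
Proof.
  unfold in_ball. intros Hkm Hxy.
  rewrite (zp_seq_le x k m Hkm), (zp_seq_le y k m Hkm), Hxy. reflexivity.
Qed.

Lemma in_ball_trans (x y z : Zp p) m : in_ball m x y -> in_ball m y z -> in_ball m x z.
Proof. unfold in_ball. congruence. Qed.

Lemma in_ball_sub (x x' y : Zp p) m : in_ball m x x' -> in_ball m (zp_sub x y) (zp_sub x' y).
Proof. unfold in_ball, zp_sub. simpl. intros ->. reflexivity. Qed.

Definition rep (l : nat) (x : Zp p) : Zp p := zp_of_nat p Hp (Z.to_nat (zp_seq x l)).

Lemma rep_index_lt l (x : Zp p) : (Z.to_nat (zp_seq x l) < p ^ l)%nat.
Proof. pose proof (zp_range p x l) as Hr. rewrite pmod_nat in Hr. lia. Qed.

Lemma rep_in_ball l (x : Zp p) : in_ball l x (rep l x).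
Proof.
  unfold in_ball, rep, zp_of_nat. simpl. pose proof (zp_range p x l).
  rewrite Z2Nat.id by lia. rewrite Z.mod_small; lia.
Qed.

Lemma rsum_single (g : nat -> R) n k : (k < n)%nat ->
  (forall i, (i < n)%nat -> i <> k -> g i = 0) -> rsum g n = g k.
Proof.
  assert (Hzero : forall j, (forall i, (i < j)%nat -> g i = 0) -> rsum g j = 0).
  { induction j as [|j IH]; intros Hg; simpl; [reflexivity|].
    rewrite IH by (intros; apply Hg; lia). rewrite Hg by lia. ring. }
  induction n as [|n IH]; intros Hk Hg; [lia|]. simpl.
  destruct (Nat.eq_dec k n) as [->|Hne].
  - rewrite Hzero by (intros; apply Hg; lia). ring.
  - rewrite IH, (Hg n) by (auto; lia). ring.
Qed.

Lemma Pl_rep l f (x : Zp p) : Pl p Hp l f x = f (rep l x).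
Proof.
  unfold Pl. pose proof (rep_index_lt l x) as Hlt.
  pose proof (zp_range p x l) as Hr.
  rewrite (rsum_single _ _ (Z.to_nat (zp_seq x l))); auto.
  - unfold Omega, zp_of_nat at 2. simpl. rewrite Z2Nat.id, pmod_nat, Z.mod_small by lia.
    destruct (Z.eq_dec (zp_seq x l) (zp_seq x l)); [|congruence]. unfold rep. ring.
  - intros i Hi Hne. unfold Omega, zp_of_nat. simpl. rewrite pmod_nat, Z.mod_small by lia.
    destruct (Z.eq_dec (zp_seq x l) (Z.of_nat i)); [lia|ring].
Qed.

Lemma Pl_close (f : Zp p -> R) m l eta :
  (forall x y, in_ball m x y -> Rabs (f x - f y) <= eta) -> (m <= l)%nat ->
  forall x, Rabs (Pl p Hp l f x - f x) <= eta.
Proof.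
  intros Hf Hml x. rewrite Pl_rep, Rabs_minus_sym. apply Hf.
  apply (in_ball_mono _ _ m l Hml), rep_in_ball.
Qed.

End PAdicBalls.

Lemma common_threshold (P : nat -> nat -> Prop) N :
  (forall k M M', P k M -> (M <= M')%nat -> P k M') ->
  (forall k, (k < N)%nat -> exists M, P k M) -> exists M, forall k, (k < N)%nat -> P k M.
Proof.
  intros Hmono. induction N as [|N IH]; intros H.
  - exists 0%nat. intros; lia.
  - destruct IH as [M1 HM1]. { intros; apply H; lia. }
    destruct (H N) as [M2 HM2]; [lia|].
    exists (Nat.max M1 M2). intros k Hk.
    destruct (Nat.eq_dec k N) as [->|].
    + apply (Hmono _ M2); [auto|lia].
    + apply (Hmono _ M1); [apply HM1; lia|lia].
Qed.

Section Compactness.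

Variable p : nat.
Hypothesis Hp : prime (Z.of_nat p).
Variable f : Zp p -> R.
Variable eps : R.

Definition oscillates (n : nat) (r : Z) : Prop :=
  forall m, (n <= m)%nat -> exists x y : Zp p,
    zp_seq x n = r /\ in_ball m x y /\ eps < Rabs (f x - f y).

(* Koenig step: an oscillating ball has an oscillating sub-ball of the next level
   (a ball of level n is the union of finitely many balls of level n+1). *)
Lemma oscillates_child n r : oscillates n r ->
  exists k, (0 <= k < pmod p (S n))%Z /\ (k mod pmod p n = r)%Z /\ oscillates (S n) k.
Proof.
  intros Hosc. apply NNPP. intros Hnone.
  set (P := fun k M => forall m, (M <= m)%nat -> forall x y : Zp p,
     zp_seq x (S n) = Z.of_nat k -> zp_seq x n = r -> in_ball m x y -> Rabs (f x - f y) <= eps).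
  destruct (common_threshold P (p ^ S n)) as [M HM].
  - intros k M M' HP HMM m Hm. apply HP. lia.
  - intros k Hk. destruct (classic (oscillates (S n) (Z.of_nat k))) as [Hk'|Hk'].
    + exists 0%nat. intros m _ x y Hx Hxn _. exfalso. apply Hnone. exists (Z.of_nat k).
      split; [rewrite pmod_nat; lia|]. split; [|auto].
      rewrite <- Hx, <- Hxn. symmetry. apply (zp_seq_le p Hp). lia.
    + apply not_all_ex_not in Hk'. destruct Hk' as [m0 Hm0].
      apply imply_to_and in Hm0. destruct Hm0 as [Hm0 Hne].
      exists m0. intros m Hm x y Hx _ Hxy. apply Rnot_lt_le. intro Hlt. apply Hne.
      exists x, y. repeat split; auto. apply (in_ball_mono p Hp _ _ _ m); auto.
  - destruct (Hosc (Nat.max M (S n))) as (x & y & Hx & Hxy & Hgt); [lia|].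
    pose proof (rep_index_lt p (S n) x) as Hk.
    pose proof (zp_range p x (S n)).
    specialize (HM _ Hk (Nat.max M (S n)) ltac:(lia) x y).
    rewrite Z2Nat.id in HM by lia. specialize (HM eq_refl Hx Hxy). lra.
Qed.

Lemma child_choice n r : { k | oscillates n r ->
  (0 <= k < pmod p (S n))%Z /\ (k mod pmod p n = r)%Z /\ oscillates (S n) k }.
Proof.
  apply constructive_indefinite_description.
  destruct (classic (oscillates n r)) as [H|H].
  - destruct (oscillates_child n r H) as [k Hk]. exists k. auto.
  - exists 0%Z. tauto.
Qed.

Fixpoint branch (n : nat) : Z :=
  match n with O => 0%Z | S n => proj1_sig (child_choice n (branch n)) end.

Lemma branch_spec : oscillates 0 0%Z -> forall n,
  oscillates n (branch n) /\ (0 <= branch n < pmod p n)%Z /\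
  (branch (S n) mod pmod p n = branch n)%Z.
Proof.
  intros H0. induction n as [|n IH].
  - destruct (proj2_sig (child_choice 0 0%Z) H0) as (_ & Hmod & _).
    split; [exact H0|]. split; [unfold pmod; simpl; lia|exact Hmod].
  - destruct IH as (Hosc & _). simpl.
    destruct (proj2_sig (child_choice n (branch n)) Hosc) as (Hr & _ & Hosc').
    destruct (proj2_sig (child_choice (S n) _) Hosc') as (_ & Hmod & _).
    auto.
Qed.

End Compactness.

Lemma unif_cont p (Hp : prime (Z.of_nat p)) (f : Zp p -> R) : cont_Zp f ->
  forall eps, 0 < eps -> exists m, forall x y, in_ball m x y -> Rabs (f x - f y) <= eps.
Proof.
  intros Hf eps Heps. apply NNPP. intros Hn.
  assert (Hosc0 : oscillates p f eps 0 0%Z).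
  { intros m _. apply NNPP. intros H2. apply Hn. exists m. intros x y Hb.
    apply Rnot_lt_le. intro. apply H2. exists x, y. repeat split; auto.
    pose proof (zp_range p x 0). unfold pmod in *. simpl in *. lia. }
  pose proof (branch_spec p Hp f eps Hosc0) as Hspec.
  set (z := mkZp p (branch p Hp f eps) (fun n => proj1 (proj2 (Hspec n)))
                                       (fun n => proj2 (proj2 (Hspec n)))).
  destruct (Hf z (eps/2) ltac:(lra)) as [l Hl].
  destruct (proj1 (Hspec l) l (le_n l)) as (x & y & Hx & Hxy & Hgt).
  assert (Bx : in_ball l z x) by (unfold in_ball; simpl; auto).
  assert (By : in_ball l z y) by (eapply in_ball_trans; eauto).
  pose proof (Hl x Bx). pose proof (Hl y By). clear - H H0 Hgt. solve_abs.
Qed.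

Lemma rsum_term (g : nat -> R) n k : (forall i, 0 <= g i) -> (k < n)%nat -> g k <= rsum g n.
Proof.
  intros H. induction n as [|n IH]; intros Hk; [lia|]. simpl.
  assert (0 <= rsum g n) by (clear IH Hk; induction n; simpl; [lra|]; specialize (H n); lra).
  destruct (Nat.eq_dec k n) as [->|]; [lra|]. specialize (IH ltac:(lia)). specialize (H n). lra.
Qed.

Lemma cont_bounded p (Hp : prime (Z.of_nat p)) (f : Zp p -> R) : cont_Zp f ->
  exists B, 0 <= B /\ forall x, Rabs (f x) <= B.
Proof.
  intros Hf. destruct (unif_cont p Hp f Hf 1 ltac:(lra)) as [m Hm].
  set (S := rsum (fun i => Rabs (f (zp_of_nat p Hp i))) (p ^ m)).
  assert (Hbd : forall x : Zp p, Rabs (f x) <= S + 1).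
  { intros x. specialize (Hm _ _ (rep_in_ball p Hp m x)).
    assert (Rabs (f (rep p Hp m x)) <= S)
      by (apply (rsum_term (fun i => Rabs (f (zp_of_nat p Hp i))));
          [intros; apply Rabs_pos | apply rep_index_lt]).
    clear - Hm H. solve_abs. }
  exists (S + 1). split; [|exact Hbd].
  pose proof (Hbd (zp_of_nat p Hp 0)). pose proof (Rabs_pos (f (zp_of_nat p Hp 0))). lra.
Qed.

Lemma LimSup_bounded (u : nat -> R) B : (forall n, Rabs (u n) <= B) ->
  exists l, LimSup_seq u = Finite l.
Proof.
  intros H. assert (H1 : Rbar_le (LimSup_seq u) (LimSup_seq (fun _ => B))).
  { apply LimSup_le. exists 0%nat. intros n _. specialize (H n). solve_abs. }
  assert (H2 : Rbar_le (LimSup_seq (fun _ => -B)) (LimSup_seq u)).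
  { apply LimSup_le. exists 0%nat. intros n _. specialize (H n). solve_abs. }
  rewrite LimSup_seq_const in H1, H2.
  destruct (LimSup_seq u); simpl in *; try contradiction. eauto.
Qed.

Lemma LimInf_bounded (u : nat -> R) B : (forall n, Rabs (u n) <= B) ->
  exists l, LimInf_seq u = Finite l.
Proof.
  intros H. assert (H1 : Rbar_le (LimInf_seq u) (LimInf_seq (fun _ => B))).
  { apply LimInf_le. exists 0%nat. intros n _. specialize (H n). solve_abs. }
  assert (H2 : Rbar_le (LimInf_seq (fun _ => -B)) (LimInf_seq u)).
  { apply LimInf_le. exists 0%nat. intros n _. specialize (H n). solve_abs. }
  rewrite LimInf_seq_const in H1, H2.
  destruct (LimInf_seq u); simpl in *; try contradiction. eauto.
Qed.

Lemma LimSup_shift (u : nat -> R) l M : LimSup_seq u = Finite l ->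
  LimSup_seq (fun n => u n + M) = Finite (l + M).
Proof.
  intros H. apply is_LimSup_seq_unique.
  pose proof (proj2_sig (ex_LimSup_seq u)) as C. fold (LimSup_seq u) in C.
  rewrite H in C. simpl in *.
  intros e. destruct (C e) as [C1 [N C2]]. split.
  - intros N'. destruct (C1 N') as [n [Hn Hl]]. exists n. split; auto. lra.
  - exists N. intros n Hn. specialize (C2 n Hn). lra.
Qed.

Lemma LimInf_shift (u : nat -> R) l M : LimInf_seq u = Finite l ->
  LimInf_seq (fun n => u n + M) = Finite (l + M).
Proof.
  intros H. apply is_LimInf_seq_unique.
  pose proof (proj2_sig (ex_LimInf_seq u)) as C. fold (LimInf_seq u) in C.
  rewrite H in C. simpl in *.
  intros e. destruct (C e) as [C1 [N C2]]. split.
  - intros N'. destruct (C1 N') as [n [Hn Hl]]. exists n. split; auto. lra.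
  - exists N. intros n Hn. specialize (C2 n Hn). lra.
Qed.

(* Two bounded sequences that stay M-close have (generalized) limits that are M-close;
   no convergence is required, since Lim_seq averages the upper and lower limits. *)
Lemma Lim_seq_close (a b : nat -> R) B M : (forall n, Rabs (a n) <= B) ->
  (forall n, Rabs (a n - b n) <= M) ->
  Rabs (real (Lim_seq a) - real (Lim_seq b)) <= M.
Proof.
  intros Ha Hab.
  assert (Hb : forall n, Rabs (b n) <= B + M)
    by (intros n; specialize (Ha n); specialize (Hab n); solve_abs).
  destruct (LimSup_bounded a B Ha) as [sa Hsa].
  destruct (LimInf_bounded a B Ha) as [ia Hia].
  destruct (LimSup_bounded b _ Hb) as [sb Hsb].
  destruct (LimInf_bounded b _ Hb) as [ib Hib].
  assert (E1 : Rbar_le (LimSup_seq b) (LimSup_seq (fun n => a n + M))).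
  { apply LimSup_le. exists 0%nat. intros n _. specialize (Hab n). solve_abs. }
  assert (E2 : Rbar_le (LimSup_seq a) (LimSup_seq (fun n => b n + M))).
  { apply LimSup_le. exists 0%nat. intros n _. specialize (Hab n). solve_abs. }
  assert (E3 : Rbar_le (LimInf_seq b) (LimInf_seq (fun n => a n + M))).
  { apply LimInf_le. exists 0%nat. intros n _. specialize (Hab n). solve_abs. }
  assert (E4 : Rbar_le (LimInf_seq a) (LimInf_seq (fun n => b n + M))).
  { apply LimInf_le. exists 0%nat. intros n _. specialize (Hab n). solve_abs. }
  rewrite (LimSup_shift _ _ _ Hsa), Hsb in E1.
  rewrite (LimSup_shift _ _ _ Hsb), Hsa in E2.
  rewrite (LimInf_shift _ _ _ Hia), Hib in E3.
  rewrite (LimInf_shift _ _ _ Hib), Hia in E4.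
  simpl in E1, E2, E3, E4.
  unfold Lim_seq. rewrite Hsa, Hia, Hsb, Hib. simpl. solve_abs.
Qed.

Lemma rsum_diff (g h : nat -> R) n M : (forall i, Rabs (g i - h i) <= M) ->
  Rabs (rsum g n - rsum h n) <= INR n * M.
Proof.
  intros H. induction n as [|n IH].
  - simpl. rewrite Rminus_0_r, Rabs_R0. lra.
  - rewrite S_INR. simpl rsum. specialize (H n). solve_abs.
Qed.

Section Haar.

Variable p : nat.
Hypothesis Hp : prime (Z.of_nat p).

Definition riemann_sum (F : Zp p -> R) (l : nat) : R :=
  rsum (fun i => F (zp_of_nat p Hp i)) (p ^ l) / INR (p ^ l).

Lemma riemann_sum_diff (F G : Zp p -> R) D l : (forall y, Rabs (F y - G y) <= D) ->
  Rabs (riemann_sum F l - riemann_sum G l) <= D.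
Proof.
  intros HFG. unfold riemann_sum.
  assert (Hpos : 0 < INR (p ^ l)) by (apply lt_0_INR, pow_p_pos, Hp).
  pose proof (rsum_diff (fun i => F (zp_of_nat p Hp i)) (fun i => G (zp_of_nat p Hp i))
                (p ^ l) D (fun i => HFG _)) as Hsum.
  unfold Rdiv. rewrite <- Rmult_minus_distr_r, Rabs_mult, Rabs_inv, (Rabs_right (INR _)) by lra.
  apply Rmult_le_reg_r with (INR (p ^ l)); auto.
  rewrite Rmult_assoc, Rinv_l, Rmult_1_r by lra. lra.
Qed.

Lemma riemann_sum_zero l : riemann_sum (fun _ => 0) l = 0.
Proof.
  unfold riemann_sum. replace (rsum _ (p ^ l)) with 0; [unfold Rdiv; ring|].
  induction (p ^ l)%nat as [|n IH]; simpl; [reflexivity|rewrite <- IH; ring].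
Qed.

Lemma haar_diff (F G : Zp p -> R) B D : (forall y, Rabs (F y) <= B) ->
  (forall y, Rabs (F y - G y) <= D) ->
  Rabs (haar_int p Hp F - haar_int p Hp G) <= D.
Proof.
  intros HF HFG. apply Lim_seq_close with (B := B); [|intros l; exact (riemann_sum_diff F G D l HFG)].
  intros l. change (Rabs (riemann_sum F l) <= B).
  rewrite <- (Rminus_0_r (riemann_sum F l)), <- (riemann_sum_zero l).
  apply riemann_sum_diff. intros y. rewrite Rminus_0_r. apply HF.
Qed.

Lemma conv_lip (w f g : Zp p -> R) W B D x :
  (forall y, Rabs (w y) <= W) -> (forall y, Rabs (f y) <= B) ->
  (forall y, Rabs (f y - g y) <= D) ->
  Rabs (conv p Hp w f x - conv p Hp w g x) <= W * D.
Proof.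
  intros Hw Hf Hfg. unfold conv. apply haar_diff with (B := W * B).
  - intros y. rewrite Rabs_mult. apply Rmult_le_compat; auto using Rabs_pos.
  - intros y. rewrite <- Rmult_minus_distr_l, Rabs_mult.
    apply Rmult_le_compat; auto using Rabs_pos.
Qed.

Lemma conv_equi (w f : Zp p -> R) W B eta m x x' :
  (forall z z', in_ball m z z' -> Rabs (w z - w z') <= eta) ->
  (forall y, Rabs (w y) <= W) -> (forall y, Rabs (f y) <= B) -> in_ball m x x' ->
  Rabs (conv p Hp w f x - conv p Hp w f x') <= eta * B.
Proof.
  intros Hm Hw Hf Hb. unfold conv. apply haar_diff with (B := W * B).
  - intros y. rewrite Rabs_mult. apply Rmult_le_compat; auto using Rabs_pos.
  - intros y. rewrite <- Rmult_minus_distr_r, Rabs_mult.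
    apply Rmult_le_compat; auto using Rabs_pos, in_ball_sub.
Qed.

End Haar.

Lemma real_ind (T : R) (Q : R -> Prop) : 0 <= T ->
  (forall t, 0 <= t <= T -> (forall s, 0 <= s < t -> Q s) ->
     exists d, 0 < d /\ forall s, 0 <= s < t + d -> Q s) ->
  forall t, 0 <= t <= T -> Q t.
Proof.
  intros HT Hstep.
  set (good := fun x => x <= T /\ forall s, 0 <= s < x -> Q s).
  assert (Hbnd : bound good) by (exists T; intros x [H _]; auto).
  assert (Hne : exists x, good x) by (exists 0; split; [auto|intros; lra]).
  destruct (completeness good Hbnd Hne) as [m [Hub Hlub]].
  assert (Hm0 : 0 <= m) by (apply Hub; split; [auto|intros; lra]).
  assert (HmT : m <= T) by (apply Hlub; intros x [H _]; auto).
  assert (Hbelow : forall s, 0 <= s < m -> Q s).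
  { intros s Hs. apply NNPP. intros Hn.
    assert (m <= s); [|lra]. apply Hlub. intros x [_ Hx].
    apply Rnot_lt_le. intro Hlt. apply Hn, Hx. lra. }
  destruct (Hstep m (conj Hm0 HmT) Hbelow) as [d [Hd Hq]].
  destruct (Rlt_or_le m T) as [Hlt|Hge].
  - exfalso. assert (Hgood : good (Rmin (m + d/2) T)).
    { split; [apply Rmin_r|]. intros s Hs. apply Hq.
      pose proof (Rmin_l (m + d/2) T). lra. }
    apply Hub in Hgood. unfold Rmin in Hgood. destruct (Rle_dec (m + d/2) T); lra.
  - intros t Ht. apply Hq. lra.
Qed.

Lemma exp_le x y : x <= y -> exp x <= exp y.
Proof. intros [H|H]; [left; apply exp_increasing; auto|subst; lra]. Qed.

Definition unif_deriv {J : Type} (e e' : R -> J -> R) : Prop :=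
  forall t, 0 <= t -> forall eta, 0 < eta -> exists d, 0 < d /\
    forall s, 0 <= s -> Rabs (s - t) < d -> forall j,
      Rabs (e s j - e t j - (s - t) * e' t j) <= eta * Rabs (s - t).

Lemma bound_at_left_limit (f : R -> R) f' t C : 0 < t ->
  (exists d, 0 < d /\ forall s, 0 <= s -> Rabs (s - t) < d ->
     Rabs (f s - f t - (s - t) * f') <= Rabs (s - t)) ->
  (forall s, 0 <= s < t -> Rabs (f s) <= C) -> Rabs (f t) <= C.
Proof.
  intros Ht [d [Hd Hder]] Hleft. apply Rnot_lt_le. intros Hgt.
  set (gap := Rabs (f t) - C). set (M := Rabs f' + 1).
  assert (HM : 0 < M) by (unfold M; pose proof (Rabs_pos f'); lra).
  set (h := Rmin (Rmin t d) (gap / M) / 2).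
  assert (Hgap : 0 < gap / M) by (apply Rdiv_lt_0_compat; unfold gap; lra).
  assert (Hh : 0 < h /\ h < t /\ h < d /\ h < gap / M).
  { unfold h. pose proof (Rmin_l (Rmin t d) (gap / M)). pose proof (Rmin_r (Rmin t d) (gap / M)).
    pose proof (Rmin_l t d). pose proof (Rmin_r t d).
    assert (0 < Rmin (Rmin t d) (gap / M)) by (repeat apply Rmin_pos; lra). lra. }
  assert (HhM : h * M < gap).
  { destruct Hh as (_ & _ & _ & Hh). apply (Rmult_lt_compat_r M) in Hh; [|lra].
    unfold Rdiv in Hh. rewrite Rmult_assoc, Rinv_l, Rmult_1_r in Hh; lra. }
  assert (Hdist : Rabs (t - h - t) = h)
    by (replace (t - h - t) with (- h) by ring; rewrite Rabs_Ropp; apply Rabs_right; lra).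
  specialize (Hder (t - h) ltac:(lra) ltac:(lra)). rewrite Hdist in Hder.
  specialize (Hleft (t - h) ltac:(lra)).
  assert (Hprod : Rabs ((t - h - t) * f') = h * Rabs f') by (rewrite Rabs_mult, Hdist; auto).
  assert (Rabs (f t) <= C + h * M); [|unfold gap in HhM; lra].
  unfold M. clear - Hder Hleft Hprod. solve_abs.
Qed.

(* One explicit-Euler step of size q = h / tau for e' = (- e + A) / tau, with |A| <= K P + b:
   the error of the step is absorbed by the growth factor 1 + (K + 1) q. *)
Lemma euler_step_bound K b c P q v w z :
  0 <= K -> c <= P -> 0 < q < 1 -> Rabs v <= P -> Rabs w <= K * P + b ->
  Rabs (z - v - q * (- v + w)) <= (2 * c - b) * q ->
  Rabs z <= P * (1 + (K + 1) * q).
Proof.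
  intros HK HcP Hq Hv Hw Hstep.
  assert (Hv' : Rabs (v * (1 - q)) <= P * (1 - q))
    by (rewrite Rabs_mult, (Rabs_right (1 - q)) by lra; apply Rmult_le_compat_r; lra).
  assert (Hw' : Rabs (q * w) <= q * (K * P + b))
    by (rewrite Rabs_mult, (Rabs_right q) by lra; apply Rmult_le_compat_l; lra).
  replace z with (v * (1 - q) + q * w + (z - v - q * (- v + w))) by ring.
  eapply Rle_trans; [apply Rabs_triang|].
  eapply Rle_trans; [apply Rplus_le_compat_r, Rabs_triang|]. nra.
Qed.

Lemma barrier (J : Type) (tau T b c K : R) (e e' A : R -> J -> R) :
  0 < tau -> 0 <= K -> 0 < c -> b < 2 * c -> 0 <= T ->
  (forall j, Rabs (e 0 j) <= c) -> unif_deriv e e' ->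
  (forall t j, 0 <= t <= T -> e' t j = (- e t j + A t j) / tau) ->
  (forall t, 0 <= t <= T -> (forall j, Rabs (e t j) <= c * exp ((K + 1) / tau * t)) ->
     forall j, Rabs (A t j) <= K * (c * exp ((K + 1) / tau * t)) + b) ->
  forall t, 0 <= t <= T -> forall j, Rabs (e t j) <= c * exp ((K + 1) / tau * t).
Proof.
  intros Htau HK Hc Hbc HT H0 Hder Hode HA.
  set (lam := (K + 1) / tau).
  assert (Hlam : 0 < lam) by (apply Rdiv_lt_0_compat; lra).
  apply (real_ind T (fun t => forall j, Rabs (e t j) <= c * exp (lam * t)) HT).
  intros t Ht Hprev.
  assert (Hat : forall j, Rabs (e t j) <= c * exp (lam * t)).
  { intros j. destruct (Req_dec t 0) as [->|Ht0].
    - rewrite Rmult_0_r, exp_0, Rmult_1_r. apply H0.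
    - apply (bound_at_left_limit (fun s => e s j) (e' t j)); [lra| |].
      + destruct (Hder t ltac:(lra) 1 ltac:(lra)) as [d [Hd Hs]].
        exists d. split; [auto|]. intros s Hs0 Hst. rewrite <- (Rmult_1_l (Rabs (s - t))). auto.
      + intros s Hs. eapply Rle_trans; [apply (Hprev s Hs)|].
        apply Rmult_le_compat_l, exp_le; nra. }
  destruct (Hder t ltac:(lra) ((2 * c - b) / tau) ltac:(apply Rdiv_lt_0_compat; lra))
    as [d [Hd Hstep]].
  exists (Rmin d tau). split; [apply Rmin_pos; lra|].
  intros s [Hs0 Hs1] j.
  destruct (Rtotal_order s t) as [Hlt|[->|Hgt]]; [apply Hprev; lra|apply Hat|].
  set (h := s - t). set (q := h / tau).
  assert (Hh : 0 < h < d /\ h < tau)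
    by (unfold h; pose proof (Rmin_l d tau); pose proof (Rmin_r d tau); lra).
  assert (Hq : 0 < q < 1).
  { unfold q. split; [apply Rdiv_lt_0_compat; lra|].
    apply (Rmult_lt_reg_r tau); auto. unfold Rdiv. rewrite Rmult_assoc, Rinv_l; lra. }
  assert (HP : c <= c * exp (lam * t))
    by (rewrite <- (Rmult_1_r c) at 1; apply Rmult_le_compat_l; [lra|];
        rewrite <- exp_0; apply exp_le; nra).
  specialize (Hstep s Hs0 ltac:(rewrite Rabs_right; unfold h in Hh; lra) j).
  rewrite (Rabs_right (s - t)) in Hstep by lra. fold h in Hstep.
  rewrite (Hode t j Ht) in Hstep.
  replace ((2 * c - b) / tau * h) with ((2 * c - b) * q) in Hstep by (unfold q; field; lra).
  replace (h * ((- e t j + A t j) / tau)) with (q * (- e t j + A t j)) in Hstep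
    by (unfold q; field; lra).
  eapply Rle_trans; [apply (euler_step_bound K b c _ q _ (A t j) _ HK HP Hq (Hat j)
                              (HA t Ht Hat j) Hstep)|].
  replace (lam * s) with (lam * t + (K + 1) * q) by (unfold lam, q, h; field; lra).
  rewrite exp_plus, <- Rmult_assoc. apply Rmult_le_compat_l; [nra|].
  apply exp_ineq1_le.
Qed.

Definition lipschitz (S : R -> R) (L : R) : Prop :=
  forall a b, Rabs (S a - S b) <= L * Rabs (a - b).

Lemma bounded_lipschitz_nonneg (S : R -> R) : bounded_lipschitz S ->
  exists M L, 0 <= L /\ (forall a, Rabs (S a) <= M) /\ lipschitz S L.
Proof.
  intros [[M HM] [L HL]]. exists M, (Rabs L). split; [apply Rabs_pos|]. split; [exact HM|].
  intros a b. eapply Rle_trans; [apply HL|].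
  apply Rmult_le_compat_r; [apply Rabs_pos|apply Rle_abs].
Qed.

Section Nonlinearity.

Variable p : nat.
Hypothesis Hp : prime (Z.of_nat p).

Lemma h_equicont (h : R -> Zp p -> R) : cont_time_CZp h ->
  forall T, 0 <= T -> forall eta, 0 < eta -> exists m, forall t, 0 <= t <= T ->
    forall x x', in_ball m x x' -> Rabs (h t x - h t x') <= eta.
Proof.
  intros [Hspace Htime] T HT eta Heta.
  assert (Hq : forall t, 0 <= t <= T -> exists m, forall t', 0 <= t' <= t ->
    forall x x', in_ball m x x' -> Rabs (h t' x - h t' x') <= eta).
  { apply (real_ind T _ HT). intros t Ht Hprev.
    destruct (Htime t (eta/3) ltac:(lra) ltac:(lra)) as [d [Hd Hnear]].
    destruct (unif_cont p Hp (h t) (Hspace t ltac:(lra)) (eta/3) ltac:(lra)) as [m0 Hm0].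
    assert (Hlocal : forall t', 0 <= t' -> Rabs (t' - t) < d -> forall x x', in_ball m0 x x' ->
       Rabs (h t' x - h t' x') <= eta).
    { intros t' Ht' Htd x x' Hb. pose proof (Hnear t' Ht' Htd x). pose proof (Hnear t' Ht' Htd x').
      pose proof (Hm0 x x' Hb). clear - H H0 H1. solve_abs. }
    exists d. split; auto.
    destruct (Rlt_or_le (t - d/2) 0) as [Hneg|Hpos].
    - intros s Hs. exists m0. intros t' Ht' x x' Hb. apply (Hlocal t'); [lra| |auto]. solve_abs.
    - intros s Hs. destruct (Hprev (t - d/2) ltac:(lra)) as [m1 Hm1].
      exists (Nat.max m0 m1). intros t' Ht' x x' Hb.
      destruct (Rle_or_lt t' (t - d/2)).
      + apply Hm1; [lra|]. apply (in_ball_mono p Hp _ _ _ (Nat.max m0 m1)); auto; lia.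
      + apply (Hlocal t'); [lra|solve_abs|].
        apply (in_ball_mono p Hp _ _ _ (Nat.max m0 m1)); auto; lia. }
  destruct (Hq T (conj HT (Rle_refl T))) as [m Hm]. exists m. intros. apply Hm; auto.
Qed.

Section Component.

(* One component S(w1 * f1 - w2 * f2 + h) of the nonlinearity H; the component H_I is
   the same expression with the inhibitory data, so everything below applies to both. *)
Variable S : R -> R.
Variable L : R.
Hypothesis HL : 0 <= L.
Hypothesis HS : lipschitz S L.
Variables w1 w2 : Zp p -> R.
Variables W1 W2 : R.
Hypothesis Hw1 : forall y, Rabs (w1 y) <= W1.
Hypothesis Hw2 : forall y, Rabs (w2 y) <= W2.
Variable h : R -> Zp p -> R.

Lemma H_lip (f1 f2 g1 g2 : Zp p -> R) B phi s x :
  (forall y, Rabs (f1 y) <= B) -> (forall y, Rabs (f2 y) <= B) ->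
  (forall y, Rabs (g1 y - f1 y) <= phi) -> (forall y, Rabs (g2 y - f2 y) <= phi) ->
  Rabs (H_E p Hp S w1 w2 h g1 g2 s x - H_E p Hp S w1 w2 h f1 f2 s x) <= L * (W1 + W2) * phi.
Proof.
  intros Hf1 Hf2 Hg1 Hg2. unfold H_E. eapply Rle_trans; [apply HS|].
  rewrite Rmult_assoc. apply Rmult_le_compat_l; [exact HL|].
  assert (Hd1 : forall y, Rabs (f1 y - g1 y) <= phi) by (intros; rewrite Rabs_minus_sym; auto).
  assert (Hd2 : forall y, Rabs (f2 y - g2 y) <= phi) by (intros; rewrite Rabs_minus_sym; auto).
  pose proof (conv_lip p Hp w1 f1 g1 W1 B phi x Hw1 Hf1 Hd1) as C1.
  pose proof (conv_lip p Hp w2 f2 g2 W2 B phi x Hw2 Hf2 Hd2) as C2.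
  clear - C1 C2. solve_abs.
Qed.

Lemma H_equi (f1 f2 : R -> Zp p -> R) B T :
  cont_Zp w1 -> cont_Zp w2 -> cont_time_CZp h -> 0 <= T -> 0 <= B ->
  (forall t, 0 <= t <= T -> forall x, Rabs (f1 t x) <= B /\ Rabs (f2 t x) <= B) ->
  forall eta, 0 < eta -> exists m, forall t, 0 <= t <= T -> forall x x', in_ball m x x' ->
   Rabs (H_E p Hp S w1 w2 h (f1 t) (f2 t) t x - H_E p Hp S w1 w2 h (f1 t) (f2 t) t x') <= eta.
Proof.
  intros Hc1 Hc2 Hh HT HB Hf eta Heta.
  set (e1 := eta / (3 * (L + 1) * (B + 1))).
  assert (He1 : 0 < e1) by (apply Rdiv_lt_0_compat; [lra|]; apply Rmult_lt_0_compat; lra).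
  assert (He1e : e1 * (3 * (L + 1) * (B + 1)) = eta) by (unfold e1; field; lra).
  destruct (unif_cont p Hp w1 Hc1 e1 He1) as [m1 Hm1].
  destruct (unif_cont p Hp w2 Hc2 e1 He1) as [m2 Hm2].
  destruct (h_equicont h Hh T HT e1 He1) as [m3 Hm3].
  exists (Nat.max m1 (Nat.max m2 m3)). intros t Ht x x' Hb.
  assert (Hball : forall k, (k <= Nat.max m1 (Nat.max m2 m3))%nat -> in_ball k x x')
    by (intros k Hk; exact (in_ball_mono p Hp _ _ _ _ Hk Hb)).
  pose proof (conv_equi p Hp w1 (f1 t) W1 B e1 m1 x x' Hm1 Hw1
                (fun y => proj1 (Hf t Ht y)) (Hball m1 ltac:(lia))) as B1.
  pose proof (conv_equi p Hp w2 (f2 t) W2 B e1 m2 x x' Hm2 Hw2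
                (fun y => proj2 (Hf t Ht y)) (Hball m2 ltac:(lia))) as B2.
  pose proof (Hm3 t Ht x x' (Hball m3 ltac:(lia))) as B3.
  unfold H_E. eapply Rle_trans; [apply HS|].
  apply Rle_trans with (L * (e1 * B + e1 * B + e1)).
  - apply Rmult_le_compat_l; [exact HL|]. clear - B1 B2 B3. solve_abs.
  - rewrite <- He1e. nra.
Qed.

Lemma forcing_bound (f1 f2 g1 g2 : Zp p -> R) B phi eta l s y :
  (forall z, Rabs (f1 z) <= B) -> (forall z, Rabs (f2 z) <= B) ->
  (forall z, Rabs (g1 z - f1 z) <= phi) -> (forall z, Rabs (g2 z - f2 z) <= phi) ->
  (forall z, Rabs (Pl p Hp l (H_E p Hp S w1 w2 h f1 f2 s) z - H_E p Hp S w1 w2 h f1 f2 s z) <= eta) ->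
  Rabs (Pl p Hp l (H_E p Hp S w1 w2 h g1 g2 s) y - H_E p Hp S w1 w2 h f1 f2 s y)
    <= L * (W1 + W2) * phi + eta.
Proof.
  intros Hf1 Hf2 Hg1 Hg2 Hproj.
  pose proof (H_lip f1 f2 g1 g2 B phi s (rep p Hp l y) Hf1 Hf2 Hg1 Hg2) as Hlip.
  pose proof (Hproj y) as Hy. rewrite Pl_rep in Hy |- *. clear - Hlip Hy. solve_abs.
Qed.

End Component.

End Nonlinearity.

(* The pair (F, G) seen as a single function of the index (b, x), b selecting the component;
   this turns the sup norm on X into a supremum over one index set. *)
Definition pack {X : Type} (F G : R -> X -> R) : R -> bool * X -> R :=
  fun t j => if fst j then F t (snd j) else G t (snd j).

Lemma C1_unif_deriv p (E I E' I' : R -> Zp p -> R) :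
  C1_X E I E' I' -> unif_deriv (pack E I) (pack E' I').
Proof.
  intros [_ [Hquot _]] t Ht eta Heta. destruct (Hquot t eta Ht Heta) as [d [Hd Hs]].
  exists d. split; [exact Hd|]. intros s Hs0 Hst [b x]. unfold pack. simpl.
  destruct (Req_dec s t) as [->|Hne].
  - match goal with |- Rabs ?a <= _ * Rabs ?b => replace a with 0 by ring; replace b with 0 by ring end.
    rewrite Rabs_R0. lra.
  - destruct (Hs s Hs0 Hne Hst) as [HE HI].
    assert (Hfac : forall a a' a'', a - a' - (s - t) * a'' = (s - t) * ((a - a') / (s - t) - a''))
      by (intros; field; lra).
    rewrite Hfac, Rabs_mult, (Rmult_comm eta).
    apply Rmult_le_compat_l; [apply Rabs_pos|]. destruct b; [apply HE|apply HI].
Qed.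

Lemma unif_deriv_sub {J : Type} (e1 e1' e2 e2' : R -> J -> R) :
  unif_deriv e1 e1' -> unif_deriv e2 e2' ->
  unif_deriv (fun t j => e1 t j - e2 t j) (fun t j => e1' t j - e2' t j).
Proof.
  intros H1 H2 t Ht eta Heta.
  destruct (H1 t Ht (eta/2) ltac:(lra)) as [d1 [Hd1 Hs1]].
  destruct (H2 t Ht (eta/2) ltac:(lra)) as [d2 [Hd2 Hs2]].
  exists (Rmin d1 d2). split; [apply Rmin_pos; auto|]. intros s Hs0 Hst j.
  pose proof (Rmin_l d1 d2). pose proof (Rmin_r d1 d2).
  specialize (Hs1 s Hs0 ltac:(lra) j). specialize (Hs2 s Hs0 ltac:(lra) j).
  replace (e1 s j - e2 s j - (e1 t j - e2 t j) - (s - t) * (e1' t j - e2' t j))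
    with ((e1 s j - e1 t j - (s - t) * e1' t j) - (e2 s j - e2 t j - (s - t) * e2' t j)) by ring.
  clear - Hs1 Hs2. solve_abs.
Qed.

Lemma pack_ode {X : Type} tau (E I E' I' AE AI : R -> X -> R) : 0 < tau ->
  (forall t x, 0 <= t -> E' t x + E t x / tau = AE t x / tau /\
                         I' t x + I t x / tau = AI t x / tau) ->
  forall t j, 0 <= t -> pack E' I' t j = (- pack E I t j + pack AE AI t j) / tau.
Proof.
  intros Htau Hode t [b x] Ht. unfold pack. simpl.
  destruct (Hode t x Ht) as [HE HI].
  assert (Hsolve : forall v a, (- v + a) / tau = a / tau - v / tau) by (intros; field; lra).
  destruct b; rewrite Hsolve; lra.
Qed.

Section Model.

Variable p : nat.
Hypothesis Hp : prime (Z.of_nat p).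
Variable tau : R.
Hypothesis Htau : 0 < tau.
Variables SE SI : R -> R.
Variables ME MI LE LI : R.
Hypothesis HSE_bd : forall a, Rabs (SE a) <= ME.
Hypothesis HSI_bd : forall a, Rabs (SI a) <= MI.
Hypothesis HLE : 0 <= LE.
Hypothesis HLI : 0 <= LI.
Hypothesis HSE_lip : lipschitz SE LE.
Hypothesis HSI_lip : lipschitz SI LI.
Variables wEE wEI wIE wII : Zp p -> R.
Hypotheses (HwEE : cont_Zp wEE) (HwEI : cont_Zp wEI) (HwIE : cont_Zp wIE) (HwII : cont_Zp wII).
Variables hE hI : R -> Zp p -> R.
Hypotheses (HhE : cont_time_CZp hE) (HhI : cont_time_CZp hI).
Variables E0 I0 : Zp p -> R.
Hypotheses (HE0 : cont_Zp E0) (HI0 : cont_Zp I0).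
Variables E I : R -> Zp p -> R.
Hypothesis Hsol : is_solution p Hp tau SE SI wEE wEI wIE wII hE hI E0 I0 E I.

(* The exact solution is bounded on [0, T]: barrier estimate with K = 0, since |H| <= ME + MI. *)
Lemma sol_bound T : 0 <= T ->
  exists B, 0 <= B /\ forall t, 0 <= t <= T -> forall x, Rabs (E t x) <= B /\ Rabs (I t x) <= B.
Proof.
  intros HT. destruct Hsol as (E' & I' & HC1 & HE0e & HI0e & Hode).
  destruct (cont_bounded p Hp E0 HE0) as [BE [HBE0 HBE]].
  destruct (cont_bounded p Hp I0 HI0) as [BI [HBI0 HBI]].
  assert (HM : 0 <= ME /\ 0 <= MI)
    by (pose proof (HSE_bd 0); pose proof (HSI_bd 0); pose proof (Rabs_pos (SE 0));
        pose proof (Rabs_pos (SI 0)); lra).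
  set (c := BE + BI + ME + MI + 1).
  assert (Hbound : forall t, 0 <= t <= T -> forall j,
            Rabs (pack E I t j) <= c * exp ((0 + 1) / tau * t)).
  { apply (barrier _ tau T (ME + MI) c 0 _ (pack E' I')
             (pack (fun t => H_E p Hp SE wEE wEI hE (E t) (I t) t)
                   (fun t => H_I p Hp SI wIE wII hI (E t) (I t) t)));
      try (unfold c; lra).
    - intros [[|] y]; unfold pack; simpl; [rewrite HE0e | rewrite HI0e];
        [specialize (HBE y)|specialize (HBI y)]; unfold c; lra.
    - exact (C1_unif_deriv p E I E' I' HC1).
    - intros t j Ht. apply (pack_ode tau E I E' I'); [exact Htau| |lra].
      intros; apply Hode; assumption.
    - intros t _ _ [[|] y]; unfold pack, H_E, H_I; simpl; rewrite Rmult_0_l, Rplus_0_l;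
        [specialize (HSE_bd (conv p Hp wEE (E t) y - conv p Hp wEI (I t) y + hE t y))
        |specialize (HSI_bd (conv p Hp wIE (E t) y - conv p Hp wII (I t) y + hI t y))]; lra. }
  exists (c * exp ((0 + 1) / tau * T)). split.
  { apply Rlt_le, Rmult_lt_0_compat; [unfold c; lra|apply exp_pos]. }
  intros t Ht x.
  assert (Hmono : c * exp ((0 + 1) / tau * t) <= c * exp ((0 + 1) / tau * T))
    by (apply Rmult_le_compat_l; [unfold c; lra|]; apply exp_le;
        apply Rmult_le_compat_l; [apply Rlt_le, Rdiv_lt_0_compat|]; lra).
  split; [pose proof (Hbound t Ht (true, x)) | pose proof (Hbound t Ht (false, x))];
    unfold pack in *; simpl in *; lra.
Qed.

Lemma discretization_error : exists K, 0 <= K /\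
  forall T c l (El Il : R -> Zp p -> R), 0 <= T -> 0 < c ->
  is_disc_solution p Hp l tau SE SI wEE wEI wIE wII hE hI E0 I0 El Il ->
  (forall x, Rabs (Pl p Hp l E0 x - E0 x) <= c) ->
  (forall x, Rabs (Pl p Hp l I0 x - I0 x) <= c) ->
  (forall t, 0 <= t <= T -> forall x,
     Rabs (Pl p Hp l (H_E p Hp SE wEE wEI hE (E t) (I t) t) x
           - H_E p Hp SE wEE wEI hE (E t) (I t) t x) <= c) ->
  (forall t, 0 <= t <= T -> forall x,
     Rabs (Pl p Hp l (H_I p Hp SI wIE wII hI (E t) (I t) t) x
           - H_I p Hp SI wIE wII hI (E t) (I t) t x) <= c) ->
  forall t, 0 <= t <= T -> forall j,
    Rabs (pack El Il t j - pack E I t j) <= c * exp ((K + 1) / tau * t).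
Proof.
  destruct (cont_bounded p Hp wEE HwEE) as [WEE [HWEE0 HWEE]].
  destruct (cont_bounded p Hp wEI HwEI) as [WEI [HWEI0 HWEI]].
  destruct (cont_bounded p Hp wIE HwIE) as [WIE [HWIE0 HWIE]].
  destruct (cont_bounded p Hp wII HwII) as [WII [HWII0 HWII]].
  exists (LE * (WEE + WEI) + LI * (WIE + WII)). split; [nra|].
  intros T c l El Il HT Hc Hdisc HinE HinI HprojE HprojI.
  destruct (sol_bound T HT) as [B [_ HB]].
  destruct Hsol as (E' & I' & HC1 & HE0e & HI0e & Hode).
  destruct Hdisc as (El' & Il' & HlC1 & _ & HlE0 & HlI0 & Hlode).
  apply (barrier _ tau T c c _ _ (fun t j => pack El' Il' t j - pack E' I' t j)
    (fun t j => pack (fun t => Pl p Hp l (H_E p Hp SE wEE wEI hE (El t) (Il t) t))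
                     (fun t => Pl p Hp l (H_I p Hp SI wIE wII hI (El t) (Il t) t)) t j
              - pack (fun t => H_E p Hp SE wEE wEI hE (E t) (I t) t)
                     (fun t => H_I p Hp SI wIE wII hI (E t) (I t) t) t j));
    try (nra || lra).
  - intros [[|] y]; unfold pack; simpl; [rewrite HlE0, HE0e | rewrite HlI0, HI0e]; auto.
  - exact (unif_deriv_sub _ _ _ _ (C1_unif_deriv p _ _ _ _ HlC1) (C1_unif_deriv p _ _ _ _ HC1)).
  - intros t j Ht. cbv beta.
    rewrite (pack_ode tau El Il El' Il' _ _ Htau (fun t x Ht => Hlode t x Ht) t j ltac:(lra)),
            (pack_ode tau E I E' I' _ _ Htau (fun t x Ht => Hode t x Ht) t j ltac:(lra)).
    unfold pack; destruct (fst j); field; lra.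
  - intros t Ht Hclose.
    set (phi := c * exp ((LE * (WEE + WEI) + LI * (WIE + WII) + 1) / tau * t)) in *.
    assert (Hphi : 0 <= phi) by (apply Rlt_le, Rmult_lt_0_compat; [lra|apply exp_pos]).
    assert (HdE : forall z, Rabs (El t z - E t z) <= phi) by (intros z; apply (Hclose (true, z))).
    assert (HdI : forall z, Rabs (Il t z - I t z) <= phi) by (intros z; apply (Hclose (false, z))).
    assert (HKE : 0 <= LE * (WEE + WEI) * phi) by (apply Rmult_le_pos; [apply Rmult_le_pos|]; lra).
    assert (HKI : 0 <= LI * (WIE + WII) * phi) by (apply Rmult_le_pos; [apply Rmult_le_pos|]; lra).
    intros [[|] y]; unfold pack; simpl.
    + pose proof (forcing_bound p Hp SE LE HLE HSE_lip wEE wEI WEE WEI HWEE HWEI hE (E t) (I t)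
        (El t) (Il t) B phi c l t y (fun z => proj1 (HB t Ht z)) (fun z => proj2 (HB t Ht z))
        HdE HdI (HprojE t Ht)) as Hf.
      eapply Rle_trans; [exact Hf|lra].
    + pose proof (forcing_bound p Hp SI LI HLI HSI_lip wIE wII WIE WII HWIE HWII hI (E t) (I t)
        (El t) (Il t) B phi c l t y (fun z => proj1 (HB t Ht z)) (fun z => proj2 (HB t Ht z))
        HdE HdI (HprojI t Ht)) as Hf.
      eapply Rle_trans; [exact Hf|lra].
Qed.

(* Convergence: choose the level l so fine that the projection errors of the initial data
   and of H along the exact solution are below c = eps / (2 exp((K + 1) T / tau)). *)
Lemma convergence (El Il : nat -> R -> Zp p -> R) :
  (forall l, (1 <= l)%nat ->
     is_disc_solution p Hp l tau SE SI wEE wEI wIE wII hE hI E0 I0 (El l) (Il l)) ->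
  forall T, 0 < T -> forall eps, 0 < eps -> exists L : nat,
    forall l, (1 <= l)%nat -> (L <= l)%nat -> forall t, 0 <= t <= T ->
      unif_close (El l t) (E t) eps /\ unif_close (Il l t) (I t) eps.
Proof.
  intros Hsoll T HT eps Heps.
  destruct discretization_error as [K [HK Herr]].
  destruct (sol_bound T ltac:(lra)) as [B [HB0 HB]].
  destruct (cont_bounded p Hp wEE HwEE) as [WEE [_ HWEE]].
  destruct (cont_bounded p Hp wEI HwEI) as [WEI [_ HWEI]].
  destruct (cont_bounded p Hp wIE HwIE) as [WIE [_ HWIE]].
  destruct (cont_bounded p Hp wII HwII) as [WII [_ HWII]].
  set (c := eps / (2 * exp ((K + 1) / tau * T))).
  assert (Hc : 0 < c) by (apply Rdiv_lt_0_compat; [lra|]; pose proof (exp_pos ((K + 1) / tau * T)); lra).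
  destruct (unif_cont p Hp E0 HE0 c Hc) as [mE HmE].
  destruct (unif_cont p Hp I0 HI0 c Hc) as [mI HmI].
  destruct (H_equi p Hp SE LE HLE HSE_lip wEE wEI WEE WEI HWEE HWEI hE E I B T
              HwEE HwEI HhE ltac:(lra) HB0 HB c Hc) as [mHE HmHE].
  destruct (H_equi p Hp SI LI HLI HSI_lip wIE wII WIE WII HWIE HWII hI E I B T
              HwIE HwII HhI ltac:(lra) HB0 HB c Hc) as [mHI HmHI].
  exists (Nat.max (Nat.max mE mI) (Nat.max mHE mHI)). intros l Hl HLl t Ht.
  pose proof (Herr T c l (El l) (Il l) ltac:(lra) Hc (Hsoll l Hl)
    (Pl_close p Hp E0 mE l c HmE ltac:(lia)) (Pl_close p Hp I0 mI l c HmI ltac:(lia))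
    (fun s Hs => Pl_close p Hp _ mHE l c (HmHE s Hs) ltac:(lia))
    (fun s Hs => Pl_close p Hp _ mHI l c (HmHI s Hs) ltac:(lia)) t Ht) as Hbound.
  assert (Hfinal : c * exp ((K + 1) / tau * t) <= eps / 2).
  { replace (eps / 2) with (c * exp ((K + 1) / tau * T))
      by (unfold c; field; apply Rgt_not_eq, exp_pos).
    apply Rmult_le_compat_l; [lra|]. apply exp_le, Rmult_le_compat_l; [|lra].
    apply Rlt_le, Rdiv_lt_0_compat; lra. }
  split; intros x; [pose proof (Hbound (true, x)) | pose proof (Hbound (false, x))];
    unfold pack in *; simpl in *; lra.
Qed.

End Model.

Theorem theorem2 (p : nat) (Hp : prime (Z.of_nat p)) (tau : R) (Htau : 0 < tau)
  (SE SI : R -> R) (HSE : bounded_lipschitz SE) (HSI : bounded_lipschitz SI)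
  (HSE0 : SE 0 = 0) (HSI0 : SI 0 = 0)
  (wEE wEI wIE wII : Zp p -> R)
  (HwEE : cont_Zp wEE) (HwEI : cont_Zp wEI) (HwIE : cont_Zp wIE) (HwII : cont_Zp wII)
  (hE hI : R -> Zp p -> R) (HhE : cont_time_CZp hE) (HhI : cont_time_CZp hI)
  (E0 I0 : Zp p -> R) (HE0 : cont_Zp E0) (HI0 : cont_Zp I0)
  (E I : R -> Zp p -> R)
  (Hsol : is_solution p Hp tau SE SI wEE wEI wIE wII hE hI E0 I0 E I)
  (El Il : nat -> R -> Zp p -> R)
  (Hsoll : forall l : nat, (1 <= l)%nat ->
     is_disc_solution p Hp l tau SE SI wEE wEI wIE wII hE hI E0 I0 (El l) (Il l)) :
  forall T : R, 0 < T ->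
  forall eps : R, 0 < eps -> exists L : nat, forall l : nat, (1 <= l)%nat -> (L <= l)%nat ->
    forall t : R, 0 <= t <= T ->
      unif_close (El l t) (E t) eps /\ unif_close (Il l t) (I t) eps.
Proof.
  destruct (bounded_lipschitz_nonneg SE HSE) as (ME & LE & HLE & HSE_bd & HSE_lip).
  destruct (bounded_lipschitz_nonneg SI HSI) as (MI & LI & HLI & HSI_bd & HSI_lip).
  exact (convergence p Hp tau Htau SE SI ME MI LE LI HSE_bd HSI_bd HLE HLI HSE_lip HSI_lip
           wEE wEI wIE wII HwEE HwEI HwIE HwII hE hI HhE HhI E0 I0 HE0 HI0 E I Hsol El Il Hsoll).
Qed.
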